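(* Let $q$ be a prime power, $m\ge1$, $g_1,\dots,g_n\in\mathbb{F}_{q^m}$ linearly independent over $\mathbb{F}_q$, $\mathbf g=(g_1,\dots,g_n)$, $\mathbf r=(r_1,\dots,r_n)\in\mathbb{F}_{q^m}^n$. Identify $[f(x)\ \ g(x)]\in\mathcal{L}_q(x,q^m)^2$ with $Q(x,y)=f(x)+g(y)$. Then the interpolation module $\mathfrak M(\mathbf r)$ consists exactly of all $Q(x,y)=f(x)+g(y)$ with $f,g\in\mathcal{L}_q(x,q^m)$ such that $Q(g_i,r_i)=0$ for $i=1,\dots,n$.
   Context: Write $[i]:=q^i$. A $q$-linearized polynomial is $f(x)=\sum_{i=0}^{d}a_ix^{[i]}$ with $a_i\in\mathbb{F}_{q^m}$; $\mathcal{L}_q(x,q^m)$ is the ring of these under addition and composition $\circ$. $\Pi_{\mathbf g}(x)=\prod_{u\in\langle g_1,\dots,g_n\rangle}(x-u)$ ($\mathbb{F}_q$-span) is the $q$-annihilator polynomial, an element of $\mathcal{L}_q(x,q^m)$. $\Lambda_{\mathbf g,\mathbf r}(x)=\sum_{i=1}^n(-1)^{n-i}r_i\det(\mathfrak D_i(\mathbf g,x))/\det(M_n(g_1,\dots,g_n))$, where $M_n(v_1,\dots,v_s)$ is the $n\times s$ matrix with $(j,l)$ entry $v_l^{[j-1]}$ and $\mathfrak D_i(\mathbf g,x)$ is $M_n(g_1,\dots,g_n,x)$ with the $i$-th column removed; it lies in $\mathcal{L}_q(x,q^m)$ and $\Lambda_{\mathbf g,\mathbf r}(g_i)=r_i$.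 The interpolation module $\mathfrak M(\mathbf r)$ is the set of all $\beta\circ[\Pi_{\mathbf g}(x)\ \ 0]+\gamma\circ[-\Lambda_{\mathbf g,\mathbf r}(x)\ \ x]$ with $\beta,\gamma\in\mathcal{L}_q(x,q^m)$, where $h\circ[f_1\ f_2]:=[h\circ f_1\ \ h\circ f_2]$. *)

From HB Require Import structures.
From mathcomp Require Import all_boot all_order all_algebra all_field.
Set Implicit Arguments. Unset Strict Implicit. Unset Printing Implicit Defensive.
Import GRing.Theory.
Local Open Scope ring_scope.

Definition prime_power (q : nat) : Prop :=
  exists p k : nat, prime p /\ (0 < k)%N /\ q = (p ^ k)%N.

Definition linearized (F : fieldType) (q : nat) (p : {poly F}) : Prop :=
  forall i : nat, p`_i != 0 -> exists k : nat, i = (q ^ k)%N.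

Definition in_Fq (F : fieldType) (q : nat) (c : F) : bool := c ^+ q == c.

Definition Fq_lin_indep (F : fieldType) (q n : nat) (g : 'I_n -> F) : Prop :=
  forall c : 'I_n -> F, (forall i, in_Fq q (c i)) ->
    \sum_(i < n) c i * g i = 0 -> forall i, c i = 0.

Definition Fq_span (F : finFieldType) (q n : nat) (g : 'I_n -> F) : {set F} :=
  [set u : F | [exists c : {ffun 'I_n -> F},
      [forall i, in_Fq q (c i)] && (u == \sum_(i < n) c i * g i)]].

Definition annihilator (F : finFieldType) (q n : nat) (g : 'I_n -> F) : {poly F} :=
  \prod_(u in Fq_span q g) ('X - u%:P).

(* M_n(g_1,...,g_n): (j,l) entry g_l^[j-1] (0-indexed: g_l^(q^j)) *)
Definition Moore (F : fieldType) (q n : nat) (g : 'I_n -> F) : 'M[F]_n :=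
  \matrix_(j < n, l < n) g l ^+ (q ^ j).

(* columns of M_n(g_1,...,g_n,x), x an indeterminate *)
Definition ext_col (F : fieldType) (n : nat) (g : 'I_n -> F) (l : 'I_n.+1) : {poly F} :=
  match insub (nat_of_ord l) with
  | Some l' => (g l')%:P
  | None => 'X
  end.

(* D_i(g,x): M_n(g_1,...,g_n,x) with the i-th column removed *)
Definition Dmat (F : fieldType) (q n : nat) (g : 'I_n -> F) (i : 'I_n) : 'M[{poly F}]_n :=
  \matrix_(j < n, l < n) ext_col g (lift (widen_ord (leqnSn n) i) l) ^+ (q ^ j).

(* Lambda_{g,r}(x) = sum_i (-1)^(n-i) r_i det(D_i(g,x)) / det(M_n(g)), i 1-indexed *)
Definition Lambda (F : fieldType) (q n : nat) (g r : 'I_n -> F) : {poly F} :=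
  (\det (Moore q g))^-1 *:
    \sum_(i < n) (((-1) ^+ (n - i.+1)%N * r i) *: \det (Dmat q g i)).

(* Interpolation module M(r): pairs [f1 f2] = beta o [Pi 0] + gamma o [-Lambda x]
   with beta, gamma linearized; composition h o f is  h \Po f  (= h(f(x))). *)
Definition interp_module (F : finFieldType) (q n : nat) (g r : 'I_n -> F)
    (f1 f2 : {poly F}) : Prop :=
  exists beta gamma : {poly F}, linearized q beta /\ linearized q gamma /\
    f1 = (beta \Po annihilator q g) + (gamma \Po (- Lambda q g r)) /\
    f2 = (beta \Po 0) + (gamma \Po 'X).

From HB Require Import structures.
From mathcomp Require Import all_boot all_order all_algebra all_field.
From mathcomp Require Import zify.
Import GRing.Theory.
Local Open Scope ring_scope.

(* Let U be the F_q-span of the g_i and Pi its annihilator. Evaluation of a q-linearized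
   polynomial is F_q-linear, so for linearized f1, f2 the polynomial f1(x) + f2(y) vanishes
   at every (g_i, r_i) iff h := f1 + f2 o Lambda vanishes on U, since Lambda is linearized
   with Lambda(g_i) = r_i (Cramer's rule for the Moore matrix, which is invertible because
   a nonzero linearized polynomial of q-degree < n cannot vanish on the q^n points of U).
   As Pi is linearized and monic of degree q^n, dividing h on the right by Pi for
   composition leaves a linearized remainder of degree < q^n vanishing on U, hence zero:
   h = beta o Pi, and [f1 f2] = beta o [Pi 0] + f2 o [-Lambda x]. *)

Set Implicit Arguments.
Unset Strict Implicit.

Section Frobenius.
Variables (R : comNzRingType) (p : nat).
Hypothesis charRp : p \in [pchar R].

Lemma exprD_pcharX k (x y : R) : (x + y) ^+ (p ^ k) = x ^+ (p ^ k) + y ^+ (p ^ k).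
Proof.
apply: exprDn_pchar; rewrite (eq_pnat _ (pcharf_eq charRp)) pnatX pnat_id ?orbT //.
exact: pcharf_prime charRp.
Qed.

Lemma expr0_pcharX k : (0 : R) ^+ (p ^ k) = 0.
Proof. by rewrite expr0n expn_eq0 -leqn0 leqNgt (prime_gt0 (pcharf_prime charRp)). Qed.

Lemma exprN_pcharX k (x : R) : (- x) ^+ (p ^ k) = - x ^+ (p ^ k).
Proof. by apply/eqP; rewrite -subr_eq0 opprK -exprD_pcharX addNr expr0_pcharX. Qed.

Lemma expr_sum_pcharX k (I : Type) (s : seq I) (P : pred I) (f : I -> R) :
  (\sum_(i <- s | P i) f i) ^+ (p ^ k) = \sum_(i <- s | P i) f i ^+ (p ^ k).
Proof.
apply: (big_morph (fun x => x ^+ (p ^ k))); [exact: exprD_pcharX | exact: expr0_pcharX].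
Qed.

End Frobenius.

Section Linearized.
Variables (F : fieldType) (q : nat).
Implicit Types f h : {poly F}.

Lemma linearized0 : linearized q (0 : {poly F}).
Proof. by move=> i; rewrite coef0 eqxx. Qed.

Lemma linearizedD f h : linearized q f -> linearized q h -> linearized q (f + h).
Proof.
move=> lf lh i; rewrite coefD; have [/lf //|f0] := boolP (f`_i != 0).
by rewrite (eqP (negbNE f0)) add0r => /lh.
Qed.

Lemma linearizedN f : linearized q f -> linearized q (- f).
Proof. by move=> lf i; rewrite coefN oppr_eq0 => /lf. Qed.

Lemma linearizedB f h : linearized q f -> linearized q h -> linearized q (f - h).
Proof. by move=> lf lh; apply/linearizedD/linearizedN. Qed.

Lemma linearizedZ c f : linearized q f -> linearized q (c *: f).
Proof. by move=> lf i; rewrite coefZ; have [->|/lf] := eqVneq f`_i 0; rewrite ?mulr0 ?eqxx. Qed.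

Lemma linearized_sum (I : Type) (s : seq I) (P : pred I) (f : I -> {poly F}) :
  (forall i, P i -> linearized q (f i)) -> linearized q (\sum_(i <- s | P i) f i).
Proof. by move=> lf; apply: big_ind => //; [exact: linearized0 | exact: linearizedD]. Qed.

Lemma linearizedXqk k : linearized q ('X^(q ^ k) : {poly F}).
Proof.
by move=> i; rewrite coefXn; have [-> _|_] := eqVneq i (q ^ k)%N; [exists k | rewrite eqxx].
Qed.

Lemma linearizedX : linearized q ('X : {poly F}).
Proof. by rewrite -['X]expr1 -(expn0 q); apply: linearizedXqk. Qed.

Lemma linearized_coef f i : linearized q f -> f`_i = 0 \/ exists k, i = (q ^ k)%N.
Proof. by move=> lf; have [|/lf] := eqVneq f`_i 0; [left | right]. Qed.

Lemma in_Fq_expXqk (c : F) k : in_Fq q c -> c ^+ (q ^ k) = c.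
Proof.
move=> /eqP cq; elim: k => [|k IHk]; first by rewrite expn0 expr1.
by rewrite expnSr exprM IHk cq.
Qed.

Lemma horner_linearizedZ f c x :
  linearized q f -> in_Fq q c -> f.[c * x] = c * f.[x].
Proof.
move=> lf cq; rewrite !horner_coef mulr_sumr; apply: eq_bigr => i _.
have [->|[k ->]] := linearized_coef i lf; first by rewrite !mul0r mulr0.
by rewrite exprMn in_Fq_expXqk // mulrCA.
Qed.

Hypothesis q_pos : (0 < q)%N.

Lemma linearized_coef0 f : linearized q f -> f`_0 = 0.
Proof.
move=> lf; have [//|[k]] := linearized_coef 0 lf.
by move/eqP; rewrite eq_sym expn_eq0 -leqn0 leqNgt q_pos.
Qed.

Lemma horner_linearized0 f : linearized q f -> f.[0] = 0.
Proof. by move=> lf; rewrite horner_coef0 linearized_coef0. Qed.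

End Linearized.

Section FrobeniusLinearized.
Variables (F : fieldType) (p e : nat).
Hypotheses (charFp : p \in [pchar F]) (e_gt0 : (0 < e)%N).
Local Notation q := (p ^ e)%N.
Implicit Types f h : {poly F}.

Let charFpX : p \in [pchar {poly F}]. Proof. by rewrite pchar_poly. Qed.

Lemma q_gt1 : (1 < q)%N.
Proof. by rewrite -(expn0 p) ltn_exp2l // prime_gt1 // (pcharf_prime charFp). Qed.

Lemma q_gt0 : (0 < q)%N. Proof. exact: ltnW q_gt1. Qed.

Lemma in_FqB (a b : F) : in_Fq q a -> in_Fq q b -> in_Fq q (a - b).
Proof. by move=> /eqP aq /eqP bq; rewrite /in_Fq exprD_pcharX // exprN_pcharX // aq bq. Qed.

Lemma linearized_expXqk f k : linearized q f -> linearized q (f ^+ (q ^ k)).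
Proof.
move=> lf; rewrite -[f]coefK poly_def -expnM expr_sum_pcharX //.
apply: linearized_sum => i _; rewrite expnM exprZn -exprM.
have [->|[j ->]] := linearized_coef i lf.
  by rewrite expr0n expn_eq0 -leqn0 leqNgt q_gt0 scale0r; apply: linearized0.
by apply: linearizedZ; rewrite -expnD; apply: linearizedXqk.
Qed.

Lemma linearized_comp h f : linearized q h -> linearized q f -> linearized q (h \Po f).
Proof.
move=> lh lf; rewrite comp_polyE; apply: linearized_sum => i _.
have [->|[j ->]] := linearized_coef i lh; first by rewrite scale0r; apply: linearized0.
exact/linearizedZ/linearized_expXqk.
Qed.

Lemma horner_linearizedD f x y : linearized q f -> f.[x + y] = f.[x] + f.[y].
Proof.
move=> lf; rewrite !horner_coef -big_split; apply: eq_bigr => i _ /=.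
have [->|[j ->]] := linearized_coef i lf; first by rewrite !mul0r addr0.
by rewrite -expnM exprD_pcharX // mulrDr.
Qed.

Lemma horner_linearized_sum f (I : Type) (s : seq I) (P : pred I) (x : I -> F) :
  linearized q f -> f.[\sum_(i <- s | P i) x i] = \sum_(i <- s | P i) f.[x i].
Proof.
move=> lf; apply: (big_morph (horner f)); first by move=> ? ?; apply: horner_linearizedD.
exact: horner_linearized0 q_gt0 _ lf.
Qed.

Lemma comp_linearizedN h f : linearized q h -> h \Po (- f) = - (h \Po f).
Proof.
move=> lh; rewrite !comp_polyE -sumrN; apply: eq_bigr => i _ /=.
have [->|[j ->]] := linearized_coef i lh; first by rewrite !scale0r oppr0.
by rewrite -expnM exprN_pcharX // scalerN.
Qed.

End FrobeniusLinearized.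

Lemma size_subZ_monic (F : fieldType) (f h : {poly F}) :
  f != 0 -> h \is monic -> size h = size f -> (size (f - lead_coef f *: h)%R < size f)%N.
Proof.
move=> f0 mh szh; have szf : (0 < size f)%N by rewrite size_poly_gt0.
rewrite -(prednK szf) ltnS; apply/leq_sizeP => j; rewrite leq_eqVlt => /orP[/eqP <-|].
  by rewrite coefB coefZ -lead_coefE -szh -lead_coefE (eqP mh) mulr1 subrr.
by rewrite prednK // => ltfj; rewrite coefB coefZ !nth_default ?szh ?mulr0 ?subr0.
Qed.

Section FiniteField.
Variables (F : finFieldType) (p e m n : nat) (g : 'I_n -> F).
Hypotheses (charFp : p \in [pchar F]) (e_gt0 : (0 < e)%N).
Hypothesis cardF : #|F| = ((p ^ e) ^ m)%N.
Hypothesis g_indep : Fq_lin_indep (p ^ e) g.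
Local Notation q := (p ^ e)%N.
Local Notation span := (Fq_span q g).
Implicit Types f h : {poly F}.

Let charFpX : p \in [pchar {poly F}]. Proof. by rewrite pchar_poly. Qed.

Lemma dvdp_XqsubX k : ('X^q - 'X : {poly F}) %| 'X^(q ^ k) - 'X.
Proof.
elim: k => [|k IHk]; first by rewrite expn0 subrr dvdp0.
have -> : ('X^(q ^ k.+1) - 'X : {poly F}) = ('X^(q ^ k) - 'X) ^+ q + ('X^q - 'X).
  by rewrite exprD_pcharX // exprN_pcharX // -exprM -expnSr addrA subrK.
by rewrite dvdp_add ?dvdpp // dvdp_exp // (q_gt0 charFp e_gt0).
Qed.

(* [X^q - X] divides [X^#|F| - X], which splits into distinct linear factors. *)
Lemma card_Fq : (q <= #|[set c : F | in_Fq q c]|)%N.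
Proof.
have := dvdp_XqsubX m; rewrite -cardF finField_genPoly => /dvdp_prod_XsubC[msk eq_msk].
have szXq : size ('X^q - 'X : {poly F}) = q.+1.
  by rewrite size_polyDl size_polyXn // size_opp size_polyX ltnS (q_gt1 charFp e_gt0).
move: (eqp_size eq_msk); rewrite szXq size_prod_XsubC => -[eq_q]; rewrite {1}eq_q.
rewrite cardE; apply: uniq_leq_size; first exact/mask_uniq/index_enum_uniq.
move=> x x_msk; rewrite mem_enum inE /in_Fq.
have : root (\prod_(i <- mask msk (index_enum F)) ('X - i%:P)) x.
  by rewrite root_prod_XsubC.
by rewrite -(eqp_root eq_msk) /root !hornerE subr_eq0.
Qed.

Lemma card_span : (q ^ n <= #|span|)%N.
Proof.
pose Fq := [set c : F | in_Fq q c].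
pose D := [set c : {ffun 'I_n -> F} | [forall i, in_Fq q (c i)]].
pose comb (c : {ffun 'I_n -> F}) := \sum_(i < n) c i * g i.
have cardD : #|D| = (#|Fq| ^ n)%N.
  rewrite -[n in RHS]card_ord -card_ffun_on; apply: eq_card => c.
  by rewrite inE; apply/forallP/ffun_onP => c_Fq i; have := c_Fq i; rewrite inE.
have comb_inj : {in D &, injective comb}.
  move=> c1 c2; rewrite !inE => /forallP c1q /forallP c2q eq_comb; apply/ffunP => i.
  apply/eqP; rewrite -subr_eq0; apply/eqP.
  apply: (g_indep (c := fun j => c1 j - c2 j)) => [j|]; first exact: in_FqB.
  by under eq_bigr do rewrite mulrBl; rewrite sumrB [X in X - _]eq_comb subrr.
have comb_span : [set comb c | c in D] \subset span.
  apply/subsetP => _ /imsetP[c cD ->]; rewrite inE in cD.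
  by rewrite inE; apply/existsP; exists c; rewrite cD eqxx.
apply: leq_trans (subset_leq_card comb_span); rewrite card_in_imset // cardD.
by have [->|n_gt0] := posnP n; rewrite ?expn0 // leq_exp2r // card_Fq.
Qed.

Lemma mem_Fq_span i : g i \in span.
Proof.
rewrite inE; apply/existsP; exists [ffun j => (j == i)%:R]; apply/andP; split.
  apply/forallP => j; rewrite ffunE /in_Fq.
  by case: (j == i); rewrite ?mulr1n ?mulr0n ?expr1n // expr0n eqn0Ngt (q_gt0 charFp e_gt0).
rewrite (bigD1 i) //= ffunE eqxx mul1r big1 ?addr0 // => j /negbTE ji.
by rewrite ffunE ji mul0r.
Qed.

Lemma linearized_vanish_span h : linearized q h -> (forall i, h.[g i] = 0) ->
  {in span, forall u, h.[u] = 0}.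
Proof.
move=> lh h_g u; rewrite inE => /existsP[c /andP[/forallP c_Fq /eqP ->]].
rewrite (horner_linearized_sum charFp e_gt0) //; apply: big1 => i _.
by rewrite (horner_linearizedZ _ lh) ?h_g ?mulr0.
Qed.

(* A nonzero polynomial has fewer roots than its size, and the span has at least [q ^ n]
   elements. *)
Lemma linearized_vanish_size h : linearized q h -> h != 0 -> (forall i, h.[g i] = 0) ->
  (q ^ n < size h)%N.
Proof.
move=> lh h0 h_g; have roots_h : all (root h) (enum span).
  by apply/allP => u; rewrite mem_enum => /(linearized_vanish_span lh h_g) /eqP.
have := max_poly_roots h0 roots_h (enum_uniq _); rewrite -cardE.
by apply: leq_trans; rewrite ltnS card_span.
Qed.

(* For linearized P with root set V, P ^+ q - P(a) ^+ (q - 1) * P is the product of the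
   P - c P(a) = P(x - c a) over c in F_q, so its root set is V + F_q a. *)
Fixpoint subspace_poly (s : seq F) : {poly F} :=
  if s is a :: s' then
    subspace_poly s' ^+ q - ((subspace_poly s').[a] ^+ (q - 1)) *: subspace_poly s'
  else 'X.

Lemma linearized_subspace_poly s : linearized q (subspace_poly s).
Proof.
elim: s => [|a s IHs] /=; first exact: linearizedX.
apply/linearizedB/linearizedZ => //.
by have := linearized_expXqk charFp e_gt0 (k := 1) IHs; rewrite expn1.
Qed.

Lemma size_subspace_poly s :
  size (subspace_poly s) = (q ^ size s).+1 /\ subspace_poly s \is monic.
Proof.
elim: s => [|a s [IHsz IHmonic]] /=; first by rewrite size_polyX monicX expn0.
have monic_q := monic_exp q IHmonic.
have sz_q : size (subspace_poly s ^+ q) = (q ^ (size s).+1).+1.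
  have := size_exp (subspace_poly s) q; rewrite IHsz /= -expnSr => <-.
  by rewrite prednK // size_poly_gt0 monic_neq0.
have lt_sz : (size (- ((subspace_poly s).[a] ^+ (q - 1) *: subspace_poly s)) <
              size (subspace_poly s ^+ q))%N.
  rewrite size_opp (leq_ltn_trans (size_scale_leq _ _)) // IHsz sz_q ltnS.
  by rewrite ltn_exp2l ?(q_gt1 charFp e_gt0).
by rewrite size_polyDl // monicE lead_coefDl // -monicE.
Qed.

Lemma root_subspace_poly s a : a \in s -> (subspace_poly s).[a] = 0.
Proof.
elim: s => [|b s IHs] //=; rewrite inE hornerD hornerN hornerZ horner_exp.
case/orP => [/eqP ->|/IHs ->].
  by rewrite -exprSr subn1 prednK ?(q_gt0 charFp e_gt0) // subrr.
by rewrite expr0n eqn0Ngt (q_gt0 charFp e_gt0) mulr0 subrr.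
Qed.

(* Both sides are monic, the left one divides the right one (which vanishes on [span])
   and is not shorter. *)
Lemma annihilatorE : annihilator q g = subspace_poly (codom g).
Proof.
have [sz_sp monic_sp] := size_subspace_poly (codom g).
have span_roots : {in span, forall u, (subspace_poly (codom g)).[u] = 0}.
  apply: linearized_vanish_span; first exact: linearized_subspace_poly.
  by move=> i; rewrite root_subspace_poly ?codom_f.
have annE : annihilator q g = \prod_(u <- enum span) ('X - u%:P) by rewrite big_enum.
have dvd_sp : annihilator q g %| subspace_poly (codom g).
  rewrite annE uniq_roots_dvdp ?uniq_rootsE ?enum_uniq //.
  by apply/allP => u; rewrite mem_enum => /span_roots /eqP.
apply/eqP; rewrite -eqp_monic // ?annE ?monic_prod_XsubC //.
rewrite -annE -dvdp_size_eqp // eqn_leq dvdp_leq ?monic_neq0 //= sz_sp size_codom card_ord.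
by rewrite annE size_prod_XsubC -cardE ltnS card_span.
Qed.

Lemma linearized_annihilator : linearized q (annihilator q g).
Proof. by rewrite annihilatorE; apply: linearized_subspace_poly. Qed.

Lemma size_annihilator :
  size (annihilator q g) = (q ^ n).+1 /\ annihilator q g \is monic.
Proof.
by rewrite annihilatorE -[n in (q ^ n)%N]card_ord -(size_codom g); apply: size_subspace_poly.
Qed.

Lemma horner_annihilator u : u \in span -> (annihilator q g).[u] = 0.
Proof.
by move=> u_span; apply/eqP; rewrite /annihilator -big_enum -/(root _ u) root_prod_XsubC mem_enum.
Qed.

Lemma coef_sum_scaleXqk (a : 'I_n -> F) (i : nat) :
  (\sum_(j < n) a j *: 'X^(q ^ j))`_i = \sum_(j < n) a j * (i == q ^ j)%N%:R.
Proof. by rewrite coef_sum; apply: eq_bigr => j _; rewrite coefZ coefXn. Qed.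

Lemma Moore_det_neq0 : \det (Moore q g) != 0.
Proof.
apply/negP => /det0P[v v_neq0 v_ker].
pose P := \sum_(j < n) v 0 j *: 'X^(q ^ j) : {poly F}.
have coefP (k : 'I_n) : P`_(q ^ k) = v 0 k.
  rewrite coef_sum_scaleXqk (bigD1 k) //= eqxx mulr1 big1 ?addr0 // => j /negbTE jk.
  by rewrite eqn_exp2l ?(q_gt1 charFp e_gt0) // -[_ == _]/(k == j) eq_sym jk mulr0.
have [k vk] : exists k, v 0 k != 0.
  apply/existsP; apply: contraR v_neq0 => /existsPn v0; apply/eqP/rowP => j.
  by rewrite mxE; apply/eqP; have := v0 j; rewrite negbK.
have linP : linearized q P by apply: linearized_sum => j _; apply/linearizedZ/linearizedXqk.
have P_neq0 : P != 0 by apply: contraNneq vk => P0; rewrite -coefP P0 coef0.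
have P_g l : P.[g l] = 0.
  have := congr1 (fun A : 'rV_n => A 0 l) v_ker; rewrite !mxE => <-.
  by rewrite horner_sum; apply: eq_bigr => j _; rewrite hornerZ hornerXn mxE.
have n_gt0 : (0 < n)%N by apply: leq_ltn_trans (ltn_ord k).
have sizeP : (size P <= (q ^ n.-1).+1)%N.
  apply/leq_sizeP => i lt_i; rewrite coef_sum_scaleXqk big1 // => j _.
  case: eqP lt_i => [-> | _ _]; last by rewrite mulr0.
  by rewrite ltn_exp2l ?(q_gt1 charFp e_gt0) //; have := ltn_ord j; lia.
have := leq_trans (linearized_vanish_size linP P_neq0 P_g) sizeP.
by rewrite ltnS leq_exp2l ?(q_gt1 charFp e_gt0) // leqNgt prednK // leqnn.
Qed.

Lemma size_linearized h : linearized q h -> h != 0 -> exists d, size h = (q ^ d).+1.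
Proof.
move=> lh h0; have /lh[d dE] : h`_(size h).-1 != 0 by rewrite -lead_coefE lead_coef_eq0.
by exists d; rewrite -dE prednK // size_poly_gt0.
Qed.

(* Euclidean division on the right for composition: the leading term of [h], of degree
   [q ^ (n + t)], is cancelled by a multiple of [annihilator q g ^+ (q ^ t)]. *)
Lemma linearized_divp_annihilator h : linearized q h ->
  exists beta rem, [/\ linearized q beta, linearized q rem, (size rem <= q ^ n)%N
                    & h = (beta \Po annihilator q g) + rem].
Proof.
have [N] := ubnP (size h); elim: N h => // N IHN h lt_h lh.
have [le_h | lt_Pi_h] := leqP (size h) (q ^ n).
  by exists 0, h; split; rewrite ?comp_poly0 ?add0r //; apply: linearized0.
have h_neq0 : h != 0 by rewrite -size_poly_gt0 (leq_ltn_trans _ lt_Pi_h).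
have [d szh] := size_linearized lh h_neq0.
have le_nd : (n <= d)%N.
  by rewrite -(leq_exp2l _ _ (q_gt1 charFp e_gt0)) -ltnS -szh.
have [szPi monicPi] := size_annihilator.
pose Q := annihilator q g ^+ (q ^ (d - n)).
have monicQ : Q \is monic by apply: monic_exp.
have szQ : size Q = size h.
  rewrite szh -[size Q]prednK ?size_poly_gt0 ?monic_neq0 //.
  by rewrite size_exp szPi /= -expnD subnKC.
have linQ : linearized q Q by apply/linearized_expXqk/linearized_annihilator.
have [beta [rem [lbeta lrem szrem hE]]] :
    exists beta rem, [/\ linearized q beta, linearized q rem, (size rem <= q ^ n)%N
                      & h - lead_coef h *: Q = (beta \Po annihilator q g) + rem].
  apply: IHN; last exact/linearizedB/linearizedZ.
  by apply: leq_trans (size_subZ_monic h_neq0 monicQ szQ) _; rewrite -ltnS.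
exists (beta + lead_coef h *: 'X^(q ^ (d - n))), rem; split => //.
  exact/linearizedD/linearizedZ/linearizedXqk.
by rewrite comp_polyD comp_polyZ comp_Xn_poly -addrA [_ *: Q + _]addrC addrA -hE subrK.
Qed.

(* The remainder has size at most [q ^ n] yet vanishes on the [q ^ n] points of the span. *)
Lemma linearized_vanish_comp_annihilator h : linearized q h -> (forall i, h.[g i] = 0) ->
  exists beta, linearized q beta /\ h = beta \Po annihilator q g.
Proof.
move=> lh h_g; have [beta [rem [lbeta lrem szrem hE]]] := linearized_divp_annihilator lh.
exists beta; split => //; suff rem0 : rem = 0 by rewrite hE rem0 addr0.
apply: contraTeq szrem => rem_neq0; rewrite -ltnNge.
apply: linearized_vanish_size => // i; have := h_g i.
rewrite hE hornerD horner_comp horner_annihilator ?mem_Fq_span //.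
by rewrite (horner_linearized0 (q_gt0 charFp e_gt0) lbeta) add0r.
Qed.

End FiniteField.

Section Lambda.
Variables (F : fieldType) (q n : nat) (g r : 'I_n -> F).

Definition ext_val (l : 'I_n.+1) : {poly F} :=
  if insub (l : nat) is Some l' then (r l')%:P else 0.

(* [M_n(g_1, ..., g_n, x)] with the row [(r_1, ..., r_n, 0)] appended: expanding its
   determinant along the last row gives the numerator of [Lambda]. *)
Definition interp_mx : 'M[{poly F}]_n.+1 :=
  \matrix_(j, l) if (j < n)%N then ext_col g l ^+ (q ^ j) else ext_val l.

Lemma ext_col_max : ext_col g ord_max = 'X.
Proof. by rewrite /ext_col insubN // ltnn. Qed.

Lemma ext_val_max : ext_val ord_max = 0.
Proof. by rewrite /ext_val insubN // ltnn. Qed.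

Lemma ext_col_lift_max (b : 'I_n) : ext_col g (lift ord_max b) = (g b)%:P.
Proof.
rewrite /ext_col; have -> : (lift ord_max b : nat) = b by rewrite lift_max.
by rewrite valK.
Qed.

Lemma ext_val_lift_max (b : 'I_n) : ext_val (lift ord_max b) = (r b)%:P.
Proof.
rewrite /ext_val; have -> : (lift ord_max b : nat) = b by rewrite lift_max.
by rewrite valK.
Qed.

Lemma ext_col_widen (b : 'I_n) : ext_col g (widen_ord (leqnSn n) b) = (g b)%:P.
Proof. by rewrite /ext_col /= valK. Qed.

Lemma ext_val_widen (b : 'I_n) : ext_val (widen_ord (leqnSn n) b) = (r b)%:P.
Proof. by rewrite /ext_val /= valK. Qed.

Lemma LambdaE : Lambda q g r = - ((\det (Moore q g))^-1 *: \det interp_mx).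
Proof.
rewrite /Lambda -scalerN; congr (_ *: _).
rewrite (expand_det_row _ ord_max) big_ord_recr /= mxE ltnn ext_val_max mul0r addr0.
rewrite -sumrN; apply: eq_bigr => i _; rewrite mxE ltnn ext_val_widen /cofactor.
have -> : row' ord_max (col' (widen_ord (leqnSn n) i) interp_mx) = Dmat q g i.
  by apply/matrixP => a b; rewrite !mxE lift_max ltn_ord.
have -> : (n + i = (n - i.+1) + (2 * i).+1)%N by have := ltn_ord i; lia.
rewrite exprD exprS exprM sqrrN !expr1n mulr1 mulrN1 -mul_polyC polyCM polyC_exp polyCN.
by rewrite polyC1 !mulNr mulrN opprK mulrCA mulrA.
Qed.

Lemma det_map_polyC_coef0 k (A : 'M[{poly F}]_k) :
  (forall a b, A a b = ((A a b)`_0)%:P) -> \det A = (\det (map_mx (coefp 0) A))%:P.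
Proof.
move=> A_const; rewrite -det_map_mx; congr (\det _); apply/matrixP => a b.
by rewrite !mxE /= -A_const.
Qed.

Lemma linearized_det_interp_mx : linearized q (\det interp_mx).
Proof.
rewrite (expand_det_col _ ord_max); apply: linearized_sum => j _.
rewrite mxE ext_col_max ext_val_max; case: ifP => _; last first.
  by rewrite mul0r; apply: linearized0.
rewrite /cofactor det_map_polyC_coef0 => [|a b].
  by rewrite -(rmorph_sign polyC) -polyCM mulrC mul_polyC; apply/linearizedZ/linearizedXqk.
rewrite !mxE; case: ifP => _; first by rewrite ext_col_lift_max -polyC_exp coefC.
by rewrite ext_val_lift_max coefC.
Qed.

(* After evaluation at [g k], the last column is column [k] minus [r k] times the last
   unit vector. *)
Lemma horner_det_interp_mx (k : 'I_n) : (\det interp_mx).[g k] = - r k * \det (Moore q g).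
Proof.
rewrite -horner_evalE -det_map_mx -det_tr.
set At := (map_mx _ interp_mx)^T.
pose wk := widen_ord (leqnSn n) k.
pose B := \matrix_(a, b) if a == ord_max then At wk b else At a b.
pose C := \matrix_(a, b) if a == ord_max then ((b == ord_max)%:R : F) else At a b.
have wk_max : wk != ord_max by rewrite -val_eqE /= neq_ltn ltn_ord.
rewrite (@determinant_multilinear _ _ At B C ord_max 1 (- r k)); first last.
- by apply/matrixP => a b; rewrite !mxE eq_sym (negbTE (neq_lift _ _)).
- by apply/matrixP => a b; rewrite !mxE eq_sym (negbTE (neq_lift _ _)).
- apply/rowP => b; rewrite !mxE eqxx mul1r ext_col_max ext_val_max ext_col_widen ext_val_widen.
  case: (unliftP ord_max b) => [b'|] ->.
    rewrite eq_sym (negbTE (neq_lift _ _)) !lift_max ltn_ord /= mulr0 addr0.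
    by rewrite !rmorphXn /= ?horner_evalE hornerX hornerC.
  by rewrite eqxx mulr1 ltnn /= raddf0 horner_evalE hornerC subrr.
have -> : \det B = 0.
  by apply: (determinant_alternate wk_max) => b; rewrite !mxE eqxx (negbTE wk_max).
rewrite mul1r add0r; congr (_ * _).
rewrite (expand_det_row _ ord_max) big_ord_recr /= big1 ?add0r => [|b _]; last first.
  by rewrite mxE eqxx -val_eqE /= ltn_eqF ?ltn_ord // mul0r.
rewrite mxE !eqxx mul1r /cofactor /= addnn -mul2n exprM sqrrN !expr1n mul1r -det_tr.
congr (\det _); apply/matrixP => a b.
rewrite !mxE eq_sym (negbTE (neq_lift _ _)) lift_max ltn_ord.
by rewrite ext_col_lift_max rmorphXn /= horner_evalE hornerC.
Qed.

Lemma linearized_Lambda : linearized q (Lambda q g r).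
Proof. by rewrite LambdaE; apply/linearizedN/linearizedZ/linearized_det_interp_mx. Qed.

Lemma horner_Lambda (k : 'I_n) : \det (Moore q g) != 0 -> (Lambda q g r).[g k] = r k.
Proof.
move=> detM_neq0; rewrite LambdaE hornerN hornerZ horner_det_interp_mx mulNr.
by rewrite mulrN opprK mulrCA mulVf // mulr1.
Qed.

End Lambda.

Theorem theorem21 (F : finFieldType) (q m n : nat) (g r : 'I_n -> F) :
  prime_power q -> (0 < m)%N -> #|F| = (q ^ m)%N ->
  Fq_lin_indep q g ->
  forall f1 f2 : {poly F},
    interp_module q g r f1 f2 <->
    (linearized q f1 /\ linearized q f2 /\
     forall i : 'I_n, f1.[g i] + f2.[r i] = 0).
Proof.
(* [0 < m] is implied by [#|F| = q ^ m]. *)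
move=> [p [e [p_prime [e_gt0 ->]]]] _ cardF g_indep f1 f2.
have charFp : p \in [pchar F].
  by apply: (@card_finPcharP _ _ (e * m)); rewrite ?cardF ?expnM.
have q_gt0 := q_gt0 charFp e_gt0.
have detM_neq0 := Moore_det_neq0 charFp e_gt0 cardF g_indep.
have lPi := linearized_annihilator charFp e_gt0 cardF g_indep.
have lLambda := @linearized_Lambda F (p ^ e)%N n g r.
split=> [[beta [gamma [lbeta [lgamma [-> ->]]]]] | [lf1 [lf2 f_g_r]]].
  rewrite comp_poly0r (linearized_coef0 q_gt0 lbeta) add0r comp_polyXr.
  do !split=> //; first by apply/linearizedD; apply: linearized_comp => //; apply: linearizedN.
  move=> i; rewrite hornerD !horner_comp horner_annihilator ?mem_Fq_span //.
  rewrite (horner_linearized0 q_gt0 lbeta) add0r hornerN horner_Lambda //.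
  by rewrite -(horner_linearizedD charFp _ _ lgamma) addNr (horner_linearized0 q_gt0 lgamma).
pose h := f1 + (f2 \Po Lambda (p ^ e)%N g r).
have lh : linearized (p ^ e)%N h by apply/linearizedD/linearized_comp.
have h_g i : h.[g i] = 0 by rewrite hornerD horner_comp horner_Lambda.
have [beta [lbeta hE]] := linearized_vanish_comp_annihilator charFp e_gt0 cardF g_indep lh h_g.
exists beta, f2; do !split=> //.
  by rewrite -hE (comp_linearizedN (e := e) charFp) // addrK.
by rewrite comp_poly0r (linearized_coef0 q_gt0 lbeta) add0r comp_polyXr.
Qed.
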